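(* Let $I\subseteq\mathbb{K}[x_1,\dots,x_d]$ be an ideal generated by at most $d-1$ pure difference binomials. There exists a non-trivial linear loop such that every polynomial $p\in I$ is an invariant of the loop.
   Context: $\mathbb{K}=\overline{\mathbb{Q}}$. A pure difference binomial is $\bm{x}^{\bm{\alpha}}-\bm{x}^{\bm{\beta}}$ with $\bm{\alpha},\bm{\beta}\in\mathbb{N}^d$. A linear loop with initial vector $\bm{s}\in\mathbb{Q}^d$ and update matrix $M\in\mathbb{Q}^{d\times d}$ has orbit $\{M^n\bm{s} : n\ge0\}$; a polynomial $P$ is an invariant if $P(M^n\bm{s})=0$ for all $n\ge0$. The loop is non-trivial if its orbit is an infinite set. *)

From HB Require Import structures.
From mathcomp Require Import all_boot all_order all_algebra all_field.
From mathcomp Require Import mpoly.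
Set Implicit Arguments. Unset Strict Implicit. Unset Printing Implicit Defensive.
Import GRing.Theory Num.Theory.
Local Open Scope ring_scope.

Notation K := algC.

Definition monomial (d : nat) (alpha : 'I_d -> nat) : {mpoly K[d]} :=
  \prod_(i < d) 'X_i ^+ alpha i.

Definition pure_diff_binomial (d : nat) (alpha beta : 'I_d -> nat) : {mpoly K[d]} :=
  monomial alpha - monomial beta.

Definition in_ideal_gen (d : nat) (gs : seq {mpoly K[d]}) (p : {mpoly K[d]}) : Prop :=
  exists c : 'I_(size gs) -> {mpoly K[d]}, p = \sum_(i < size gs) c i * gs`_i.

Definition orbit_pt (d : nat) (s : 'cV[rat]_d) (M : 'M[rat]_d) (n : nat) : 'cV[rat]_d :=
  M ^+ n *m s.

(* Non-trivial loop: the orbit {M^n s | n >= 0} is an infinite set. *)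
Definition nontrivial_loop (d : nat) (s : 'cV[rat]_d) (M : 'M[rat]_d) : Prop :=
  ~ (exists l : seq 'cV[rat]_d, forall n : nat, orbit_pt s M n \in l).

Definition is_invariant (d : nat) (s : 'cV[rat]_d) (M : 'M[rat]_d) (P : {mpoly K[d]}) : Prop :=
  forall n : nat, P.@[fun i : 'I_d => ratr (orbit_pt s M n i 0)] = 0.

From HB Require Import structures.
From mathcomp Require Import all_boot all_order all_algebra all_field.
From mathcomp Require Import mpoly.
Set Implicit Arguments. Unset Strict Implicit. Unset Printing Implicit Defensive.
Import GRing.Theory Num.Theory.
Local Open Scope ring_scope.

(* Fewer binomials than variables means the exponent differences alpha_k - beta_k
   are orthogonal to some nonzero integer vector w. Start the loop at (1, ..., 1)
   with update diag(2^w_1, ..., 2^w_d): at time n it is at (2^(n w_i))_i, where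
   x^alpha takes the value 2^(n <w, alpha>), so every generator, hence every
   element of the ideal, vanishes along the orbit. Some w_i is nonzero, so the
   corresponding coordinate 2^(n w_i) never repeats and the orbit is infinite. *)

Lemma injective_seq_not_finite (T : eqType) (f : nat -> T) :
  injective f -> ~ exists l : seq T, forall n, f n \in l.
Proof.
move=> f_inj [l fl].
have uniq_f : uniq [seq f n | n <- iota 0 (size l).+1].
  by rewrite (map_inj_uniq f_inj) iota_uniq.
have sub_f : {subset [seq f n | n <- iota 0 (size l).+1] <= l}.
  by move=> _ /mapP[n _ ->].
by have := uniq_leq_size uniq_f sub_f; rewrite size_map size_iota ltnn.
Qed.

Lemma rat_row_int_multiple m (v : 'rV[rat]_m) :
  exists2 D : rat, D != 0 & exists w : 'rV[int]_m, map_mx intr w = D *: v.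
Proof.
pose D : rat := \prod_j (denq (v 0 j))%:~R.
exists D.
  by rewrite prodf_seq_neq0; apply/allP => j _; rewrite intr_eq0 denq_neq0.
exists (\row_i (numq (v 0 i) * \prod_(j | j != i) denq (v 0 j))); apply/rowP => i.
rewrite !mxE rmorphM rmorph_prod /D [in RHS](bigD1 i) //= numqE.
by rewrite -mulrA mulrC.
Qed.

Lemma int_row_kernel m n (A : 'M[rat]_(m, n)) :
  (n < m)%N -> exists2 w : 'rV[int]_m, w != 0 & map_mx intr w *m A = 0.
Proof.
move=> lt_nm; have : kermx A != 0.
  rewrite -mxrank_eq0 mxrank_ker subn_eq0 -ltnNge.
  exact: leq_ltn_trans (rank_leq_col A) lt_nm.
case/rowV0Pn => v /sub_kermxP vA v_neq0.
have [D D_neq0 [w wE]] := rat_row_int_multiple v.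
exists w; last by rewrite wE -scalemxAl vA scaler0.
apply: contraNneq v_neq0 => w0.
have : D *: v = 0 by rewrite -wE w0 map_mx0.
by move/eqP; rewrite scaler_eq0 (negPf D_neq0).
Qed.

Lemma orbit_pt_diag d (a : 'rV[rat]_d) n i :
  orbit_pt (const_mx 1) (diag_mx a) n i 0 = a 0 i ^+ n.
Proof.
rewrite /orbit_pt; elim: n => [|n IHn].
  by rewrite expr0 -[1]/(1%:M) mul1mx !mxE.
by rewrite exprS -mulmxE -mulmxA mul_diag_mx mxE IHn exprS.
Qed.

Lemma meval_monomial_exprz d (v : 'I_d -> K) (x : K) (w : 'I_d -> int)
    (alpha : 'I_d -> nat) :
  x != 0 -> (forall i, v i = x ^ w i) ->
  (monomial alpha).@[v] = x ^ (\sum_i w i * (alpha i)%:Z).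
Proof.
move=> x_neq0 vE; rewrite /monomial rmorph_prod /=.
rewrite (big_morph _ (fun m n => expfzDr m n x_neq0) (expr0z x)).
by apply: eq_bigr => i _; rewrite rmorphXn /= mevalXU vE -exprz_exp.
Qed.

Lemma invariant_ideal_gen d (s : 'cV[rat]_d) (M : 'M[rat]_d)
    (gs : seq {mpoly K[d]}) p :
  (forall g, g \in gs -> is_invariant s M g) ->
  in_ideal_gen gs p -> is_invariant s M p.
Proof.
move=> gs_inv [c ->] n; rewrite raddf_sum /=; apply: big1 => k _.
by rewrite mevalM (gs_inv gs`_k) ?mulr0 // mem_nth.
Qed.

Definition weight_loop_mx d (w : 'rV[int]_d) : 'M[rat]_d :=
  diag_mx (map_mx (fun z => 2%:Q ^ z) w).

Lemma weight_loop_orbit d (w : 'rV[int]_d) n i :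
  ratr (orbit_pt (const_mx 1) (weight_loop_mx w) n i 0) = (2 ^+ n : K) ^ w 0 i.
Proof.
rewrite orbit_pt_diag mxE rmorphXn fmorphXz rmorph_nat.
by rewrite -[_ ^+ n]/(_ ^ n%:Z) -[2 ^+ n]/(_ ^ n%:Z) !exprz_exp mulrC.
Qed.

Lemma weight_loop_nontrivial d (w : 'rV[int]_d) :
  w != 0 -> nontrivial_loop (const_mx 1) (weight_loop_mx w).
Proof.
case/matrix0Pn => r [i]; rewrite [r]ord1 => wi_neq0.
apply: injective_seq_not_finite => m n /(congr1 (fun u : 'cV_d => u i 0)).
rewrite /= !orbit_pt_diag mxE; apply: ieexprIn; first exact: exprz_gt0.
by apply: contra wi_neq0 => /eqP a1; apply/eqP/(ieexprIz (x := 2%:Q)); rewrite ?a1.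
Qed.

Lemma weight_loop_binomial_invariant d (w : 'rV[int]_d)
    (alpha beta : 'I_d -> nat) :
  \sum_i w 0 i * (alpha i)%:Z = \sum_i w 0 i * (beta i)%:Z ->
  is_invariant (const_mx 1) (weight_loop_mx w) (pure_diff_binomial alpha beta).
Proof.
move=> eq_weights n; rewrite /pure_diff_binomial mevalB.
have x_neq0 : (2 ^+ n : K) != 0 by rewrite expf_neq0 ?pnatr_eq0.
by rewrite !(meval_monomial_exprz _ x_neq0 (weight_loop_orbit w n)) eq_weights subrr.
Qed.

Definition exponent_diff_mx d r (alpha beta : 'I_r -> 'I_d -> nat) : 'M[rat]_(d, r) :=
  \matrix_(i, k) ((alpha k i)%:R - (beta k i)%:R).

Lemma exponent_diff_kernel_weights d r (alpha beta : 'I_r -> 'I_d -> nat)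
    (w : 'rV[int]_d) :
  map_mx intr w *m exponent_diff_mx alpha beta = 0 ->
  forall k, \sum_i w 0 i * (alpha k i)%:Z = \sum_i w 0 i * (beta k i)%:Z.
Proof.
move=> wA k; apply/eqP.
rewrite -subr_eq0 -sumrB -(intr_eq0 rat) rmorph_sum /=.
have := congr1 (fun u : 'rV[rat]_r => u 0 k) wA; rewrite !mxE => wAk.
rewrite -[X in _ == X]wAk; apply/eqP/eq_bigr => i _.
by rewrite !mxE -mulrBr rmorphM rmorphB.
Qed.

Theorem theorem5p1 (d : nat) (gens : seq (('I_d -> nat) * ('I_d -> nat)))
  (hsize : (size gens < d)%N) :
  exists (s : 'cV[rat]_d) (M : 'M[rat]_d),
    nontrivial_loop s M /\
    forall p : {mpoly K[d]},
      in_ideal_gen [seq pure_diff_binomial ab.1 ab.2 | ab <- gens] p ->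
      is_invariant s M p.
Proof.
pose ab0 : ('I_d -> nat) * ('I_d -> nat) := (fun=> 0%N, fun=> 0%N).
pose alpha (k : 'I_(size gens)) := (nth ab0 gens k).1.
pose beta (k : 'I_(size gens)) := (nth ab0 gens k).2.
have [w w_neq0 wA] := int_row_kernel (exponent_diff_mx alpha beta) hsize.
exists (const_mx 1), (weight_loop_mx w); split; first exact: weight_loop_nontrivial.
move=> p; apply: invariant_ideal_gen => g /(nthP 0)[k]; rewrite size_map => lt_k <-.
rewrite (nth_map ab0) //; apply: weight_loop_binomial_invariant.
exact: (exponent_diff_kernel_weights wA (Ordinal lt_k)).
Qed.
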